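(* Let $C$ be a finite dimensional CAT(0) cube complex with no facing triples, let $g$ be a hyperbolic cubical automorphism of $C$ and let $\mathfrak h$ be a hyperplane of $C$. Then either $g$ skewers $\mathfrak h$ or there is $n\in\mathbb N$, $n\ge1$, with $g^n\mathfrak h=\mathfrak h$.
   Context: A cubical automorphism is hyperbolic if it fixes no point of $C$. For a hyperplane $\mathfrak h$ with halfspaces $\mathfrak h^+,\mathfrak h^-$, $g$ skewers $\mathfrak h$ if there is $n\ge1$ with $g^n\mathfrak h^+\subsetneq\mathfrak h^+$ or $g^n\mathfrak h^-\subsetneq\mathfrak h^-$. A facing triple is a triple of pairwise disjoint hyperplanes none of which separates the other two. *)

(* A CAT(0) cube complex C is encoded by its 1-skeleton, a
   median graph (Chepoi / Roller / Gerasimov: 1-skeleta of CAT(0) cube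
   complexes are exactly median graphs, and C is recovered by filling in cubes).
   Cubical automorphisms of C = graph automorphisms of the 1-skeleton.
   Halfspaces = convex vertex sets with convex nonempty complement; a
   hyperplane is the unordered pair {H, complement H} of a halfspace. *)
From Stdlib Require Import Reals List Arith.
Open Scope R_scope.

Definition vset (V : Type) := V -> Prop.

Inductive walk {V : Type} (adj : V -> V -> Prop) : V -> V -> nat -> Prop :=
| walk0 x : walk adj x x 0
| walkS x y z n : adj x y -> walk adj y z n -> walk adj x z (S n).

Definition dist_is {V : Type} (adj : V -> V -> Prop) (x y : V) (n : nat) : Prop :=
  walk adj x y n /\ forall m, walk adj x y m -> (n <= m)%nat.

Definition between {V : Type} (adj : V -> V -> Prop) (x z y : V) : Prop :=
  exists a b, dist_is adj x z a /\ dist_is adj z y b /\ dist_is adj x y (a + b).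

Definition is_median_graph {V : Type} (adj : V -> V -> Prop) : Prop :=
  (forall x y, adj x y -> adj y x) /\
  (forall x, ~ adj x x) /\
  (forall x y, exists n, walk adj x y n) /\
  (forall x y z, exists m,
      (between adj x m y /\ between adj y m z /\ between adj x m z) /\
      forall m', between adj x m' y -> between adj y m' z ->
                 between adj x m' z -> m' = m).

Definition compl {V : Type} (A : vset V) : vset V := fun v => ~ A v.
Definition subset {V : Type} (A B : vset V) : Prop := forall v, A v -> B v.
Definition set_eq {V : Type} (A B : vset V) : Prop := forall v, A v <-> B v.
Definition strict_subset {V : Type} (A B : vset V) : Prop :=
  subset A B /\ ~ set_eq A B.
Definition img {V : Type} (g : V -> V) (A : vset V) : vset V :=
  fun w => exists v, A v /\ w = g v.

Definition convex {V : Type} (adj : V -> V -> Prop) (A : vset V) : Prop :=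
  forall x y z, A x -> A y -> between adj x z y -> A z.

Definition halfspace {V : Type} (adj : V -> V -> Prop) (H : vset V) : Prop :=
  convex adj H /\ convex adj (compl H) /\ (exists v, H v) /\ (exists v, ~ H v).

Definition same_hyp {V : Type} (H K : vset V) : Prop :=
  set_eq K H \/ set_eq K (compl H).

Definition crossing {V : Type} (H K : vset V) : Prop :=
  (exists v, H v /\ K v) /\ (exists v, H v /\ ~ K v) /\
  (exists v, ~ H v /\ K v) /\ (exists v, ~ H v /\ ~ K v).

Definition disjoint_hyp {V : Type} (H K : vset V) : Prop :=
  ~ same_hyp H K /\ ~ crossing H K.

(* the hyperplane of K lies in the halfspace A *)
Definition on_side {V : Type} (K A : vset V) : Prop :=
  subset K A \/ subset (compl K) A.

Definition separates {V : Type} (H K L : vset V) : Prop :=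
  (on_side K H /\ on_side L (compl H)) \/ (on_side K (compl H) /\ on_side L H).

Definition facing_triple {V : Type} (adj : V -> V -> Prop) (H1 H2 H3 : vset V) : Prop :=
  halfspace adj H1 /\ halfspace adj H2 /\ halfspace adj H3 /\
  disjoint_hyp H1 H2 /\ disjoint_hyp H1 H3 /\ disjoint_hyp H2 H3 /\
  ~ separates H1 H2 H3 /\ ~ separates H2 H1 H3 /\ ~ separates H3 H1 H2.

Definition no_facing_triples {V : Type} (adj : V -> V -> Prop) : Prop :=
  forall H1 H2 H3, ~ facing_triple adj H1 H2 H3.

Definition finite_dim {V : Type} (adj : V -> V -> Prop) : Prop :=
  exists D : nat, forall l : list (vset V),
    Forall (halfspace adj) l -> ForallOrdPairs crossing l -> (length l <= D)%nat.

Definition is_automorphism {V : Type} (adj : V -> V -> Prop) (g : V -> V) : Prop :=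
  (exists g', (forall v, g' (g v) = v) /\ (forall v, g (g' v) = v)) /\
  (forall x y, adj x y <-> adj (g x) (g y)).

(* A point x of C, in cubical coordinates: c H in [0,1] measures how far x
   lies inside the halfspace H.  The hyperplanes with fractional coordinate
   are finitely many and pairwise crossing, and they are exactly the
   hyperplanes crossing a (nonempty) vertex set Q lying in every halfspace of
   coordinate 1, i.e. x lies in the interior of the cube spanned by Q. *)
Definition is_point {V : Type} (adj : V -> V -> Prop) (c : vset V -> R) : Prop :=
  (forall A B, set_eq A B -> c A = c B) /\
  (forall H, halfspace adj H -> 0 <= c H <= 1 /\ c H + c (compl H) = 1) /\
  (exists Q : vset V, (exists v, Q v) /\
     forall H, halfspace adj H ->
       (c H = 1 -> subset Q H) /\
       (0 < c H < 1 -> (exists v, Q v /\ H v) /\ (exists v, Q v /\ ~ H v))) /\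
  (exists S : list (vset V), Forall (halfspace adj) S /\ ForallOrdPairs crossing S /\
     forall H, halfspace adj H -> 0 < c H < 1 -> Exists (same_hyp H) S).

(* g fixes the point c: (g.c)(gH) = c(H) equals c(gH) for every halfspace *)
Definition fixes_point {V : Type} (adj : V -> V -> Prop) (g : V -> V) (c : vset V -> R) : Prop :=
  forall H, halfspace adj H -> c (img g H) = c H.

Definition hyperbolic {V : Type} (adj : V -> V -> Prop) (g : V -> V) : Prop :=
  ~ exists c, is_point adj c /\ fixes_point adj g c.

Definition skewers {V : Type} (g : V -> V) (H : vset V) : Prop :=
  exists n : nat, (1 <= n)%nat /\
    (strict_subset (img (Nat.iter n g) H) H \/
     strict_subset (img (Nat.iter n g) (compl H)) (compl H)).

From Pilot Require Import Defs.
From Stdlib Require Import Reals List Arith Lia Classical ClassicalEpsilon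
  FunctionalExtensionality PropExtensionality FinFun.

(* If g neither skewers h nor stabilises it up to a power, the translates
   g^n h are pairwise distinct hyperplanes whose halfspaces g^n h^+ are
   pairwise non-nested.  Colour a pair of translates by "crossing" or
   "disjoint": by Ramsey's theorem, enough of them contain either D + 1
   pairwise crossing hyperplanes, impossible in dimension D, or three pairwise
   disjoint ones, which, being non-nested, form a facing triple. *)

Open Scope nat_scope.

Definition holds (P : Prop) : bool :=
  if excluded_middle_informative P then true else false.

Lemma holds_true (P : Prop) : holds P = true <-> P.
Proof. unfold holds; destruct (excluded_middle_informative P); intuition discriminate. Qed.

Lemma holds_false (P : Prop) : negb (holds P) = true <-> ~ P.
Proof. unfold holds; destruct (excluded_middle_informative P); intuition discriminate. Qed.

Section Ramsey.
Variables (T : Type) (c d : T -> T -> Prop).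

Lemma ForallOrdPairs_of_distinct (l : list T) : NoDup l ->
  (forall x y, In x l -> In y l -> x <> y -> c x y) -> ForallOrdPairs c l.
Proof.
  induction l as [|a l IH]; intros Hnd Hc; constructor; inversion Hnd; subst.
  - apply Forall_forall; intros y Hy.
    apply Hc; simpl; auto. intros ->; contradiction.
  - apply IH; auto. intros; apply Hc; simpl; auto.
Qed.

Fixpoint ramsey_bound (k : nat) : nat :=
  match k with 0 => 0 | S k' => S k' + ramsey_bound k' end.

(* If many elements are d-related to x, a d-pair among
   them closes a triangle with x, and otherwise they form a c-clique; if not,
   recurse on the elements c-related to x and put x in front. *)
Lemma ramsey_clique_or_triangle (k : nat) (l : list T) :
  NoDup l -> ramsey_bound k <= length l ->
  (forall x y, In x l -> In y l -> x <> y -> c x y \/ d x y) ->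
  (exists l', incl l' l /\ k <= length l' /\ ForallOrdPairs c l') \/
  (exists x y z, x <> y /\ x <> z /\ y <> z /\ d x y /\ d x z /\ d y z).
Proof.
  revert l; induction k as [|k IH]; intros l Hnd Hlen Hcd.
  { left; exists nil; repeat split; [intros ? []|simpl; lia|constructor]. }
  destruct l as [|x t]; [simpl in *; lia|].
  inversion Hnd as [|? ? Hxt Hndt]; subst.
  set (Dn := filter (fun y => holds (d x y)) t).
  set (Cn := filter (fun y => negb (holds (d x y))) t).
  assert (HD : forall y, In y Dn <-> In y t /\ d x y)
    by (intro y; unfold Dn; rewrite filter_In, holds_true; reflexivity).
  assert (HC : forall y, In y Cn <-> In y t /\ ~ d x y)
    by (intro y; unfold Cn; rewrite filter_In, holds_false; reflexivity).
  assert (Hsplit : length Dn + length Cn = length t) by apply filter_length.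
  simpl in Hlen.
  destruct (le_lt_dec (S k) (length Dn)) as [Hbig|Hsmall].
  - destruct (classic (exists y z, In y Dn /\ In z Dn /\ y <> z /\ d y z))
      as [(y & z & Hy & Hz & Hyz & Dyz)|NoPair].
    + right; apply HD in Hy as [Ty Dy]; apply HD in Hz as [Tz Dz].
      exists x, y, z; repeat split; auto; intros ->; contradiction.
    + left; exists Dn; repeat split; auto.
      * intros y Hy; right; apply HD, Hy.
      * apply ForallOrdPairs_of_distinct; [apply NoDup_filter; auto|].
        intros y z Hy Hz Hyz.
        destruct (Hcd y z) as [|Dyz]; auto; try (right; apply HD; assumption).
        exfalso; apply NoPair; exists y, z; auto.
  - destruct (IH Cn) as [(l' & Hincl & Hk & Hc)|Tri]; auto.
    + apply NoDup_filter; auto.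
    + lia.
    + intros y z Hy Hz; apply HC in Hy; apply HC in Hz; apply Hcd; simpl; tauto.
    + left; exists (x :: l'); repeat split.
      * intros y [<-|Hy]; [left; auto|right; apply HC, Hincl, Hy].
      * simpl; lia.
      * constructor; auto. apply Forall_forall; intros y Hy.
        apply Hincl, HC in Hy as [Ty NDy].
        destruct (Hcd x y) as [|]; simpl; auto; [|contradiction].
        intros ->; contradiction.
Qed.

End Ramsey.

Lemma ForallOrdPairs_map {A B : Type} (R : B -> B -> Prop) (f : A -> B) (l : list A) :
  ForallOrdPairs (fun x y => R (f x) (f y)) l -> ForallOrdPairs R (map f l).
Proof. induction 1; constructor; auto. apply Forall_map; auto. Qed.

Section Images.
Context {V : Type}.

Lemma img_comp (f h : V -> V) (A : vset V) :
  img (fun x => f (h x)) A = img f (img h A).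
Proof.
  apply functional_extensionality; intro w; apply propositional_extensionality.
  split.
  - intros [v [Av ->]]; exists (h v); split; [exists v|]; auto.
  - intros [u [[v [Av ->]] ->]]; exists v; auto.
Qed.

Variables (f : V -> V) (Hf : Bijective f).

Lemma img_bij_mem (A : vset V) (v : V) : img f A (f v) <-> A v.
Proof.
  destruct Hf as [f' [fK _]]. split.
  - intros [u [Au E]]. rewrite <- (fK v), E, fK; exact Au.
  - intro Av; exists v; auto.
Qed.

Lemma forall_bij (P : V -> Prop) : (forall w, P w) <-> (forall v, P (f v)).
Proof.
  destruct Hf as [f' [_ f'K]]. split; auto.
  intros HP w; rewrite <- (f'K w); apply HP.
Qed.

Lemma img_compl (A : vset V) : img f (compl A) = compl (img f A).
Proof.
  apply functional_extensionality; intro w; apply propositional_extensionality.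
  destruct Hf as [f' [_ f'K]]. rewrite <- (f'K w).
  unfold compl; rewrite !img_bij_mem; reflexivity.
Qed.

Lemma subset_img (A B : vset V) : subset (img f A) (img f B) <-> subset A B.
Proof. unfold subset; rewrite forall_bij. setoid_rewrite img_bij_mem; reflexivity. Qed.

Lemma set_eq_img (A B : vset V) : set_eq (img f A) (img f B) <-> set_eq A B.
Proof. unfold set_eq; rewrite forall_bij. setoid_rewrite img_bij_mem; reflexivity. Qed.

Lemma same_hyp_img (A B : vset V) : same_hyp (img f A) (img f B) <-> same_hyp A B.
Proof. unfold same_hyp; rewrite <- img_compl, !set_eq_img; reflexivity. Qed.

End Images.

Lemma same_hyp_sym {V : Type} (A B : vset V) : same_hyp A B -> same_hyp B A.
Proof.
  intros [E|E]; [left|right]; intro v; specialize (E v); unfold compl in *;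
    [tauto|split; intros; apply NNPP; tauto].
Qed.

Section Automorphisms.
Context {V : Type} (adj : V -> V -> Prop).

Lemma walk_hom (h : V -> V) : (forall x y, adj x y -> adj (h x) (h y)) ->
  forall x y n, walk adj x y n -> walk adj (h x) (h y) n.
Proof. intros Hh x y n W; induction W; econstructor; eauto. Qed.

Lemma automorphism_inverse (f : V -> V) : is_automorphism adj f ->
  exists f', is_automorphism adj f' /\
    (forall v, f' (f v) = v) /\ (forall v, f (f' v) = v).
Proof.
  intros [[f' [fK f'K]] Hadj]. exists f'; repeat split; auto.
  - exists f; auto.
  - intro A; apply Hadj; rewrite !f'K; exact A.
  - intro A; apply Hadj in A; rewrite !f'K in A; exact A.
Qed.

Lemma automorphism_iter (g : V -> V) : is_automorphism adj g ->
  forall n, is_automorphism adj (Nat.iter n g).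
Proof.
  intros Hg n. destruct (automorphism_inverse g Hg) as [g' [_ [gK g'K]]].
  split.
  - exists (Nat.iter n g'); split; induction n; intro v; try reflexivity.
    + rewrite Nat.iter_succ_r; simpl; rewrite gK; apply IHn.
    + rewrite (Nat.iter_succ_r n _ g'); simpl; rewrite IHn; apply g'K.
  - induction n; simpl; [reflexivity|].
    intros x y; rewrite IHn; apply Hg.
Qed.

Lemma dist_is_img (f : V -> V) : is_automorphism adj f ->
  forall x y n, dist_is adj x y n -> dist_is adj (f x) (f y) n.
Proof.
  intros Hf x y n [W Hmin].
  destruct (automorphism_inverse f Hf) as [f' [Hf' [fK _]]].
  split; [apply walk_hom; [apply Hf|exact W]|].
  intros m Wm; apply Hmin. rewrite <- (fK x), <- (fK y).
  apply walk_hom; [apply Hf'|exact Wm].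
Qed.

Lemma between_img (f : V -> V) : is_automorphism adj f ->
  forall x z y, Defs.between adj x z y -> Defs.between adj (f x) (f z) (f y).
Proof.
  intros Hf x z y (a & b & D1 & D2 & D3).
  exists a, b; repeat split; apply dist_is_img; auto.
Qed.

Lemma convex_img (f : V -> V) (A : vset V) :
  is_automorphism adj f -> convex adj A -> convex adj (img f A).
Proof.
  intros Hf HA.
  destruct (automorphism_inverse f Hf) as [f' [Hf' [fK f'K]]].
  intros a b z [a0 [Aa ->]] [b0 [Ab ->]] Hbt.
  exists (f' z); split; [|auto].
  apply (HA a0 b0); auto.
  rewrite <- (fK a0), <- (fK b0). apply between_img; auto.
Qed.

Lemma halfspace_img (f : V -> V) (A : vset V) :
  is_automorphism adj f -> halfspace adj A -> halfspace adj (img f A).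
Proof.
  intros Hf (CA & CcA & [v Av] & [w nAw]).
  split; [|split; [|split]].
  - apply convex_img; auto.
  - rewrite <- (img_compl f (proj1 Hf)). apply convex_img; auto.
  - exists (f v); apply (img_bij_mem f (proj1 Hf)); auto.
  - exists (f w); rewrite (img_bij_mem f (proj1 Hf)); auto.
Qed.

End Automorphisms.

Lemma not_separates_of_unnested {V : Type} (A B C : vset V) :
  ~ subset A B -> ~ subset B C -> ~ subset C A ->
  ~ subset B A -> ~ subset C B -> ~ subset A C ->
  ~ separates B A C.
Proof.
  unfold separates, on_side, subset, compl.
  intros nAB nBC nCA nBA nCB nAC [[[S1|S1] [S2|S2]]|[[S1|S1] [S2|S2]]];
    try tauto;
    [apply nCA|apply nBC|apply nAC|apply nBA]; intros v Hv; apply NNPP; intro; firstorder.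
Qed.

Section UnnestedFamilies.
Context {V : Type} (adj : V -> V -> Prop) (A : nat -> vset V).
Hypothesis A_halfspace : forall i, halfspace adj (A i).
Hypothesis A_unnested :
  forall i j, i <> j -> ~ subset (A i) (A j) /\ ~ same_hyp (A i) (A j).

Lemma facing_triple_of_unnested (x y z : nat) :
  x <> y -> x <> z -> y <> z ->
  disjoint_hyp (A x) (A y) -> disjoint_hyp (A x) (A z) -> disjoint_hyp (A y) (A z) ->
  facing_triple adj (A x) (A y) (A z).
Proof.
  intros xy xz yz Dxy Dxz Dyz.
  destruct (A_unnested x y xy) as [s1 _]; destruct (A_unnested y x (not_eq_sym xy)) as [s2 _].
  destruct (A_unnested x z xz) as [s3 _]; destruct (A_unnested z x (not_eq_sym xz)) as [s4 _].
  destruct (A_unnested y z yz) as [s5 _]; destruct (A_unnested z y (not_eq_sym yz)) as [s6 _].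
  refine (conj (A_halfspace x) (conj (A_halfspace y) (conj (A_halfspace z)
    (conj Dxy (conj Dxz (conj Dyz (conj _ (conj _ _))))))));
    apply not_separates_of_unnested; auto.
Qed.

Lemma no_unnested_family : finite_dim adj -> no_facing_triples adj -> False.
Proof.
  intros [D HD] NF.
  destruct (ramsey_clique_or_triangle nat
              (fun i j => crossing (A i) (A j)) (fun i j => disjoint_hyp (A i) (A j))
              (S D) (seq 0 (ramsey_bound (S D))) (seq_NoDup _ _))
    as [(l & _ & Hlen & Hcross)|(x & y & z & xy & xz & yz & Dxy & Dxz & Dyz)].
  - rewrite length_seq; auto.
  - intros i j _ _ Hij.
    destruct (classic (crossing (A i) (A j))); [left|right; split]; auto.
    apply (A_unnested i j Hij).
  - assert (Hbound : length (map A l) <= D).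
    { apply HD; [|apply ForallOrdPairs_map; exact Hcross].
      apply Forall_forall; intros X HX.
      apply in_map_iff in HX as [i [<- _]]; auto. }
    rewrite length_map in Hbound; lia.
  - apply (NF (A x) (A y) (A z)), facing_triple_of_unnested; auto.
Qed.

End UnnestedFamilies.

Section Translates.
Context {V : Type} (adj : V -> V -> Prop) (g : V -> V) (H : vset V).
Hypothesis g_aut : is_automorphism adj g.
Hypothesis g_not_skewers : ~ skewers g H.
Hypothesis g_no_power_stabilises :
  ~ exists n, 1 <= n /\ same_hyp H (img (Nat.iter n g) H).

Definition translate (n : nat) : vset V := img (Nat.iter n g) H.

Lemma translate_bijective (n : nat) : Bijective (Nat.iter n g).
Proof. exact (proj1 (automorphism_iter adj g g_aut n)). Qed.

Lemma translate_add (i k : nat) :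
  translate (i + k) = img (Nat.iter i g) (translate k).
Proof.
  unfold translate; rewrite <- img_comp. f_equal.
  apply functional_extensionality; intro v; apply Nat.iter_add.
Qed.

Lemma translate_not_nested (k : nat) : 1 <= k ->
  ~ subset (translate k) H /\ ~ subset H (translate k).
Proof.
  intros Hk.
  assert (Hneq : ~ set_eq (translate k) H)
    by (intro E; apply g_no_power_stabilises; exists k; split; [|left]; auto).
  split; intro S; apply g_not_skewers; exists k; split; auto.
  - left; split; auto.
  - right; rewrite img_compl by apply translate_bijective; split.
    + intros v nTv Hv; apply nTv, S, Hv.
    + intro E; apply Hneq; intro v; split; [|apply S].
      intro Tv; apply NNPP; intro nHv. apply (E v); auto.
Qed.

Lemma translates_unnested (i j : nat) : i <> j ->
  ~ subset (translate i) (translate j) /\ ~ same_hyp (translate i) (translate j).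
Proof.
  intro Hij.
  assert (Hnot_same : forall k, 1 <= k -> ~ same_hyp H (translate k))
    by (intros k Hk E; apply g_no_power_stabilises; exists k; auto).
  destruct (Nat.lt_gt_cases i j) as [[Hlt|Hgt] _]; [exact Hij| |].
  - replace j with (i + (j - i)) by lia.
    change (translate i) with (img (Nat.iter i g) H).
    rewrite translate_add, subset_img, same_hyp_img by apply translate_bijective.
    split; [apply translate_not_nested|apply Hnot_same]; lia.
  - replace i with (j + (i - j)) by lia.
    change (translate j) with (img (Nat.iter j g) H).
    rewrite translate_add, subset_img, same_hyp_img by apply translate_bijective.
    split; [apply translate_not_nested; lia|].
    intro E; apply (Hnot_same (i - j)); [lia|apply same_hyp_sym, E].
Qed.

End Translates.

Theorem mainTheorem6 (V : Type) (adj : V -> V -> Prop) (g : V -> V) (H : vset V) :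
  is_median_graph adj -> finite_dim adj -> no_facing_triples adj ->
  is_automorphism adj g -> hyperbolic adj g -> halfspace adj H ->
  skewers g H \/
  exists n : nat, (1 <= n)%nat /\ same_hyp H (img (Nat.iter n g) H).
Proof.
  intros _ Hdim Hnft Hg _ HH.
  apply NNPP; intros [Hnot_skew Hnot_stab]%not_or_and.
  apply (no_unnested_family adj (translate g H)); auto.
  - intro i; apply halfspace_img; [apply automorphism_iter|]; auto.
  - apply translates_unnested with (adj := adj); auto.
Qed.
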